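(* Let $\{\mathbb{G}_n,\ n=2,3,\ldots\}$ be a sequence of random graphs as described in the context, with $\lim_{n\to\infty}|V_n|=\infty$, and assume that for each $n$, $D_{n,k}$ has the same distribution as $D_{n,1}$ for all $k\in V_n$, and for all distinct $k,\ell\in V_n$, $(D_{n,k},D_{n,\ell})$ has the same joint distribution as $(D_{n,1},D_{n,2})$. Assume that for every $d=0,1,\ldots$ there exists a scalar $L(d)$ such that $P_n(d)\to L(d)$ in probability as $n\to\infty$. If the values $\{L(d),\ d=0,1,\ldots\}$ constitute a pmf $p=(p(d),\ d=0,1,\ldots)$ on $\mathbb{N}$ (i.e. $p(d)=L(d)$), then: (i) there exists an $\mathbb{N}$-valued random variable $D$ with pmf $p$ such that $D_{n,1}\to D$ in distribution; and (ii) for each $d=0,1,\ldots$, $\lim_{n\to\infty}\mathrm{Cov}\big[\mathbf{1}[D_{n,1}=d],\mathbf{1}[D_{n,2}=d]\big]=0$.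
   Context: All random variables are defined on a common probability space $(\Omega,\mathcal{F},\mathbb{P})$. For each $n=2,3,\ldots$, $\mathbb{G}_n$ is a random (possibly directed, self-loops allowed) graph on the deterministic finite node set $V_n=\{1,\ldots,k_n\}$ with $k_n\ge 2$, determined by $\{0,1\}$-valued edge random variables $\{\chi_n(k,\ell),\ k,\ell\in V_n\}$ ($\chi_n(k,\ell)=1$ iff there is an edge from $k$ to $\ell$). The degree of node $k$ is $D_{n,k}=\sum_{\ell\in V_n}\chi_n(k,\ell)$. For $d=0,1,\ldots$, $N_n(d)=\sum_{k\in V_n}\mathbf{1}[D_{n,k}=d]$ and $P_n(d)=N_n(d)/|V_n|$. $\mathbb{N}=\{0,1,2,\ldots\}$. *)

From HB Require Import structures.
From mathcomp Require Import all_boot all_order all_algebra.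
From mathcomp Require Import all_classical all_reals all_analysis.
Set Implicit Arguments. Unset Strict Implicit. Unset Printing Implicit Defensive.
Import Order.TTheory GRing.Theory Num.Theory.
Import numFieldNormedType.Exports.
Local Open Scope classical_set_scope.
Local Open Scope ring_scope.

(* Node set V_n = {1,...,k_n}; edge indicators chi n k l : T -> bool. *)
Definition degree {T : Type} (kn : nat -> nat) (chi : nat -> nat -> nat -> T -> bool)
    (n j : nat) (w : T) : nat :=
  (\sum_(1 <= l < (kn n).+1) chi n j l w)%N.

Definition Ncount {T : Type} (kn : nat -> nat) (chi : nat -> nat -> nat -> T -> bool)
    (n d : nat) (w : T) : nat :=
  (\sum_(1 <= j < (kn n).+1) (degree kn chi n j w == d))%N.

Definition Pfrac {R : realType} {T : Type} (kn : nat -> nat)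
    (chi : nat -> nat -> nat -> T -> bool) (n d : nat) (w : T) : R :=
  (Ncount kn chi n d w)%:R / (kn n)%:R.

Definition cvg_in_prob {d} {T : measurableType d} {R : realType}
    (P : probability T R) (X : nat -> T -> R) (c : R) : Prop :=
  forall eps : R, 0 < eps ->
    (fun n => P [set w | eps <= `|X n w - c|]) @ \oo --> 0%E.

Definition cdfN {d} {T : measurableType d} {R : realType}
    (P : probability T R) (X : T -> nat) (x : R) : R :=
  fine (P [set w | (X w)%:R <= x]).

Definition cvg_in_distrN {d d'} {T : measurableType d} {T' : measurableType d'}
    {R : realType} (P : probability T R) (X : nat -> T -> nat)
    (Q : probability T' R) (Y : T' -> nat) : Prop :=
  forall x : R, {for x, continuous (cdfN Q Y)} ->
    (fun n => cdfN P (X n) x) @ \oo --> cdfN Q Y x.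

(* Write k = |V_n| and Y_n = P_n(a) = k^-1 * sum_j 1[D_{n,j} = a], a random
   variable with values in [0, 1].  By exchangeability,
     E[Y_n] = p_n := P(D_{n,1} = a),
     E[Y_n^2] = (p_n + (k - 1) q_n) / k   with q_n := P(D_{n,1} = a, D_{n,2} = a).
   Since Y_n is bounded and converges in probability to L(a), it converges in
   L^1, so E[Y_n] -> L(a) and E[Y_n^2] -> L(a)^2.  Solving for q_n and using
   k -> oo gives q_n -> L(a)^2.  Thus P(D_{n,1} = a) -> L(a) for every a, which
   gives (i) since the cdf of D_{n,1} at x is a finite sum of these
   probabilities, and Cov[1[D_{n,1} = a], 1[D_{n,2} = a]] = q_n - p_n^2 -> 0,
   which is (ii). *)

From HB Require Import structures.
From mathcomp Require Import all_boot all_order all_algebra.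
From mathcomp Require Import all_classical all_reals all_analysis.
From mathcomp Require Import measurable_realfun lebesgue_Rintegral ring.
Import Order.TTheory GRing.Theory Num.Theory.
Import numFieldNormedType.Exports.
Local Open Scope classical_set_scope.
Local Open Scope ring_scope.

Section bounded_measurable.
Context {d : measure_display} {T : measurableType d} {R : realType}.
Variable P : probability T R.
Implicit Types (f g : T -> R) (A : set T).

Definition bounded_mfun f :=
  measurable_fun setT f /\ exists M, forall x, `|f x| <= M.

Lemma bounded_mfun_cst (c : R) : bounded_mfun (fun _ => c).
Proof. by split; [exact: measurable_cst | exists `|c|]. Qed.

Lemma bounded_mfunD {f g} :
  bounded_mfun f -> bounded_mfun g -> bounded_mfun (fun x => f x + g x).
Proof.
move=> [mf [M fM]] [mg [N gN]]; split; first exact: measurable_funD.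
by exists (M + N) => x; rewrite (le_trans (ler_normD _ _)) ?lerD.
Qed.

Lemma bounded_mfunB {f g} :
  bounded_mfun f -> bounded_mfun g -> bounded_mfun (fun x => f x - g x).
Proof.
move=> [mf [M fM]] [mg [N gN]]; split; first exact: measurable_funB.
by exists (M + N) => x; rewrite (le_trans (ler_normB _ _)) ?lerD.
Qed.

Lemma bounded_mfunM {f g} :
  bounded_mfun f -> bounded_mfun g -> bounded_mfun (fun x => f x * g x).
Proof.
move=> [mf [M fM]] [mg [N gN]]; split; first exact: measurable_funM.
by exists (M * N) => x; rewrite normrM ler_pM.
Qed.

Lemma bounded_mfun_dist {f} (c : R) :
  bounded_mfun f -> bounded_mfun (fun x => `|f x - c|).
Proof.
move=> /bounded_mfunB/(_ (bounded_mfun_cst c))[mfc [M fcM]].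
by split; [exact: measurableT_comp | exists M => x; rewrite normr_id].
Qed.

Lemma bounded_mfun_indic {A} : measurable A -> bounded_mfun (\1_A).
Proof.
move=> mA; split; first exact: measurable_indic.
by exists 1 => x; rewrite indicE; case: (x \in A); rewrite ?normr1 ?normr0.
Qed.

Lemma bounded_mfun_sum (I : Type) (s : seq I) (F : I -> T -> R) :
  (forall i, bounded_mfun (F i)) -> bounded_mfun (fun x => \sum_(i <- s) F i x).
Proof.
move=> bF; elim: s => [|i s IH].
  by under eq_fun do rewrite big_nil; exact: bounded_mfun_cst.
by under eq_fun do rewrite big_cons; exact: bounded_mfunD.
Qed.

Lemma bounded_mfun_integrable {f} :
  bounded_mfun f -> P.-integrable setT (EFin \o f).
Proof.
move=> [mf [M fM]]; apply: measurable_bounded_integrable => //.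
  by rewrite [X in (X < _)%E]probability_setT ltry.
exists M; split; first by rewrite num_real.
by move=> y My x _; exact: le_trans (fM x) (ltW My).
Qed.

Lemma bounded_mfun_Lfun1 {f} : bounded_mfun f -> f \in Lfun P 1.
Proof. by move=> bf; apply/Lfun1_integrable; exact: bounded_mfun_integrable. Qed.

#[local] Hint Resolve bounded_mfun_cst : core.

Lemma Rintegral_cst_prob (c : R) : \int[P]_x c = c.
Proof. by rewrite Rintegral_cst// [X in fine X]probability_setT mulr1. Qed.

Lemma Rintegral_indic A : measurable A -> \int[P]_x \1_A x = fine (P A).
Proof. by move=> mA; rewrite /Rintegral integral_indic// setIT. Qed.

Lemma Rintegral_sum (I : Type) (s : seq I) (F : I -> T -> R) :
  (forall i, bounded_mfun (F i)) ->
  \int[P]_x (\sum_(i <- s) F i x) = \sum_(i <- s) \int[P]_x F i x.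
Proof.
move=> bF; elim: s => [|i s IH].
  by rewrite big_nil; under eq_fun do rewrite big_nil; exact: Rintegral_cst_prob.
under eq_fun do rewrite big_cons.
rewrite big_cons -IH RintegralD//; apply: bounded_mfun_integrable => //.
exact: bounded_mfun_sum.
Qed.

Lemma Rintegral_sum_indic (I : Type) (s : seq I) (A : I -> set T) :
  (forall i, measurable (A i)) ->
  \int[P]_x (\sum_(i <- s) \1_(A i) x) = \sum_(i <- s) fine (P (A i)).
Proof.
move=> mA; rewrite Rintegral_sum => [|i]; last exact: bounded_mfun_indic.
by apply: eq_bigr => i _; rewrite Rintegral_indic.
Qed.

Lemma Rintegral_sqr_sum_indic (I : Type) (s : seq I) (A : I -> set T) :
  (forall i, measurable (A i)) ->
  \int[P]_x (\sum_(i <- s) \1_(A i) x) ^+ 2 =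
  \sum_(i <- s) \sum_(j <- s) fine (P (A i `&` A j)).
Proof.
move=> mA; have indicM i j x : \1_(A i) x * \1_(A j) x = \1_(A i `&` A j) x :> R.
  by rewrite indicI.
under eq_fun do rewrite expr2 mulr_suml.
under eq_fun do under eq_bigr do rewrite mulr_sumr.
under eq_fun do under eq_bigr do under eq_bigr do rewrite indicM.
rewrite Rintegral_sum => [|i]; last first.
  by apply: bounded_mfun_sum => j; apply/bounded_mfun_indic/measurableI.
by apply: eq_bigr => i _; rewrite Rintegral_sum_indic// => j; exact: measurableI.
Qed.

Lemma Rintegral_le_tail f (B eps : R) : 0 <= eps ->
  bounded_mfun f -> (forall x, 0 <= f x <= B) ->
  \int[P]_x f x <= eps + B * fine (P [set x | eps <= f x]).
Proof.
move=> eps0 bf f0B; have mtail : measurable [set x | eps <= f x].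
  by rewrite -preimage_itvcy -[_ @^-1` _]setTI; apply: bf.1 => //; exact: measurable_itv.
have btail : bounded_mfun (fun x => B * \1_[set x | eps <= f x] x).
  by apply: bounded_mfunM => //; exact: bounded_mfun_indic.
rewrite -Rintegral_indic// -RintegralZl//; last exact/bounded_mfun_integrable/bounded_mfun_indic.
rewrite -{1}(Rintegral_cst_prob eps) -RintegralD//;
  [|exact: bounded_mfun_integrable|exact: bounded_mfun_integrable].
apply: le_Rintegral => //.
- exact: bounded_mfun_integrable.
- by apply: bounded_mfun_integrable; exact: bounded_mfunD.
move=> x _; have /andP[f0 fB] := f0B x; rewrite indicE.
have [_|] := boolP (x \in [set x | eps <= f x]).
  by rewrite mulr1 (le_trans fB)// lerDr.
by rewrite notin_setE /= => /negP; rewrite -ltNge mulr0 addr0 => /ltW.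
Qed.

Lemma cvg_in_prob_Rintegral_dist (Y : nat -> T -> R) (c B : R) :
  (\forall n \near \oo, bounded_mfun (Y n) /\ forall x, `|Y n x - c| <= B) ->
  cvg_in_prob P Y c -> (fun n => \int[P]_x `|Y n x - c|) @ \oo --> 0.
Proof.
move=> bY Yc; apply/cvgrPdist_le => e e0; have e20 : 0 < e / 2 by rewrite divr_gt0.
have /fine_cvgP[_ tail0] := Yc _ e20.
have /cvgrPdist_le/(_ _ e20) : (fun n => B * fine (P [set x | e / 2 <= `|Y n x - c|]))
    @ \oo --> 0 by rewrite -(mulr0 B); exact: cvgMr tail0.
apply: filterS2 bY => n [bYn YnB]; rewrite !sub0r !normrN => tailn.
have distB x : 0 <= `|Y n x - c| <= B by rewrite normr_ge0 YnB.
rewrite ger0_norm ?Rintegral_ge0//.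
rewrite (le_trans (Rintegral_le_tail _ _ _ (ltW e20) (bounded_mfun_dist c bYn) distB))//.
by rewrite [leRHS](splitr e) lerD2l (le_trans (ler_norm _)).
Qed.

Lemma cvg_Rintegral_lipschitz (Y : nat -> T -> R) (g : R -> R) (c K : R) :
  (\forall n \near \oo, [/\ bounded_mfun (Y n), bounded_mfun (g \o Y n) &
     forall x, `|g (Y n x) - g c| <= K * `|Y n x - c|]) ->
  (fun n => \int[P]_x `|Y n x - c|) @ \oo --> 0 ->
  (fun n => \int[P]_x g (Y n x)) @ \oo --> g c.
Proof.
move=> gY Yc; apply/cvgrPdist_le => e e0.
have /cvgrPdist_le/(_ _ e0) : (fun n => K * \int[P]_x `|Y n x - c|) @ \oo --> 0.
  by rewrite -(mulr0 K); exact: cvgMr Yc.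
apply: filterS2 gY => n [bYn bgYn gK]; rewrite sub0r normrN => /(le_trans _); apply.
have igYc := bounded_mfun_integrable (bounded_mfunB bgYn (bounded_mfun_cst (g c))).
have idist := bounded_mfun_integrable (bounded_mfun_dist c bYn).
have igdist := bounded_mfun_integrable (bounded_mfun_dist (g c) bgYn).
have -> : g c - \int[P]_x g (Y n x) = - \int[P]_x (g (Y n x) - g c).
  by rewrite RintegralB ?Rintegral_cst_prob ?opprB//; exact: bounded_mfun_integrable.
rewrite normrN (le_trans (le_normr_Rintegral measurableT igYc))//.
rewrite (le_trans _ (ler_norm _))// -RintegralZl//.
apply: le_Rintegral => //; last by move=> x _; exact: gK.
exact/bounded_mfun_integrable/bounded_mfunM/bounded_mfun_dist.
Qed.

Lemma cvg_in_prob_moments01 (Y : nat -> T -> R) (c : R) :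
  (\forall n \near \oo, bounded_mfun (Y n) /\ forall x, 0 <= Y n x <= 1) ->
  cvg_in_prob P Y c ->
  (fun n => \int[P]_x Y n x) @ \oo --> c /\
  (fun n => \int[P]_x Y n x ^+ 2) @ \oo --> c ^+ 2.
Proof.
move=> Y01 Yc; have L1 : (fun n => \int[P]_x `|Y n x - c|) @ \oo --> 0.
  apply: (cvg_in_prob_Rintegral_dist _ c (1 + `|c|) _ Yc).
  apply: filterS Y01 => n [bY Y01]; split=> // x; have /andP[Y0 Y1] := Y01 x.
  by rewrite (le_trans (ler_normB _ _))// lerD2r ger0_norm.
split; first apply: (cvg_Rintegral_lipschitz _ id c 1 _ L1).
  by apply: filterS Y01 => n [bY _]; split=> // x; rewrite mul1r.
apply: (cvg_Rintegral_lipschitz _ (fun y => y ^+ 2) c (1 + `|c|) _ L1).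
apply: filterS Y01 => n [bY Y01]; split=> //; first exact: bounded_mfunM.
move=> x; have /andP[Y0 Y1] := Y01 x.
rewrite subrXX big_ord_recr /= big_ord1 /= expr0 expr1 mulr1 mul1r normrM mulrC.
by rewrite ler_wpM2r// (le_trans (ler_normD _ _))// lerD2r ger0_norm.
Qed.

End bounded_measurable.

Section nat_valued.
Context {d : measure_display} {T : measurableType d} {R : realType}.

Lemma indic_nat_eq (X : T -> nat) (a : nat) x :
  \1_[set x | X x = a] x = (X x == a)%:R :> R.
Proof. by rewrite indicE; case: eqP => Xa; [rewrite mem_set | rewrite memNset]. Qed.

Lemma measurable_fun_sumn (I : Type) (s : seq I) (X : I -> T -> nat) :
  (forall i, measurable_fun setT (X i)) ->
  measurable_fun setT (fun w => \sum_(i <- s) X i w)%N.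
Proof.
move=> mX; elim: s => [|i s IH].
  by under eq_fun do rewrite big_nil; exact: measurable_cst.
by under eq_fun do rewrite big_cons; exact: measurable_fun_addn.
Qed.

Lemma measurable_fun_nat_of_bool (b : T -> bool) :
  measurable [set w | b w] -> measurable_fun setT (fun w => nat_of_bool (b w)).
Proof.
move=> mb; apply: (@measurableT_comp _ _ _ _ _ _ nat_of_bool) => //.
by apply: (measurable_fun_bool true); rewrite setTI.
Qed.

Lemma measurable_nat_preimage (X : T -> nat) (B : set nat) :
  measurable_fun setT X -> measurable (X @^-1` B).
Proof. by move=> mX; rewrite -[X @^-1` B]setTI; exact: (mX measurableT B). Qed.

Lemma cdfN_sum (P : probability T R) (X : T -> nat) (x : R) :
  measurable_fun setT X ->
  cdfN P X x = if 0 <= x then \sum_(m < (Num.trunc x).+1) fine (P [set w | X w = m])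
               else 0.
Proof.
move=> mX; have mXle k : measurable [set w | (X w <= k)%N].
  exact: (measurable_nat_preimage _ [set j | (j <= k)%N] mX).
have mXeq k : measurable [set w | X w = k] by exact: (measurable_nat_preimage _ [set k] mX).
have cdf_nat M : fine (P [set w | (X w <= M)%N]) =
    \sum_(m < M.+1) fine (P [set w | X w = m]).
  elim: M => [|M IH].
    by rewrite big_ord1; congr (fine (P _)); apply/seteqP; split => w /=;
      [rewrite leqn0 => /eqP | move=> ->].
  have -> : [set w | (X w <= M.+1)%N] = [set w | (X w <= M)%N] `|` [set w | X w = M.+1].
    apply/seteqP; split => w /=; last by case=> [/leqW|->].
    by rewrite leq_eqVlt ltnS => /orP[/eqP|]; [right|left].
  rewrite measureU//; last by apply/seteqP; split => w //= [+ XM]; rewrite XM ltnn.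
  by rewrite fineD ?fin_num_measure// IH [RHS]big_ord_recr.
rewrite /cdfN; case: ifPn => x0.
  by rewrite -cdf_nat; congr (fine (P _)); apply/seteqP; split => w /=; rewrite truncn_ge_nat.
rewrite (_ : [set w | _] = set0) ?measure0//; apply/seteqP; split => w //= Xx.
by move: x0; rewrite (le_trans _ Xx).
Qed.

End nat_valued.

Lemma cvg_in_distrN_pmf {d d'} {T : measurableType d} {T' : measurableType d'}
    {R : realType} (P : probability T R) (X : nat -> T -> nat)
    (Q : probability T' R) (Y : T' -> nat) :
  (\forall n \near \oo, measurable_fun setT (X n)) -> measurable_fun setT Y ->
  (forall m, (fun n => fine (P [set w | X n w = m])) @ \oo --> fine (Q [set w | Y w = m])) ->
  cvg_in_distrN P X Q Y.
Proof.
(* The cdfs converge at every x, not only at continuity points. *)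
move=> mX mY pmf_cvg x _; rewrite cdfN_sum//.
have cdf_n : \forall n \near \oo, (if 0 <= x then
    \sum_(m < (Num.trunc x).+1) fine (P [set w | X n w = m]) else 0) = cdfN P (X n) x.
  by apply: filterS mX => n mXn; rewrite cdfN_sum.
apply: cvg_trans (near_eq_cvg cdf_n) _; case: ifP => _; last exact: cvg_cst.
by apply: cvg_big; [exact: add_continuous | move=> m _; exact: pmf_cvg].
Qed.

Lemma covariance_indic {d} {T : measurableType d} {R : realType} (P : probability T R)
    (A B : set T) : measurable A -> measurable B ->
  covariance P (\1_A) (\1_B) = (fine (P (A `&` B)) - fine (P A) * fine (P B))%:E.
Proof.
move=> mA mB; have bA := @bounded_mfun_indic _ _ R _ mA.
have bB := @bounded_mfun_indic _ _ R _ mB.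
rewrite covarianceE ?bounded_mfun_Lfun1//; last exact: bounded_mfunM bA bB.
have -> : (\1_A * \1_B)%R = \1_(A `&` B) :> (T -> R) by rewrite indicI.
rewrite !expectation_indic//; last exact: measurableI.
by rewrite EFinB EFinM !fineK ?fin_num_measure//; exact: measurableI.
Qed.

Lemma mnormalize_mass1 {d} {T : measurableType d} {R : realType}
    (mu : {measure set T -> \bar R}) (Q : probability T R) :
  mu setT = 1%E -> mnormalize mu Q = mu.
Proof. by move=> mu1; apply/funext => A; rewrite /mnormalize mu1 onee_eq0/= invr1 mule1. Qed.

Section pmf_measure.
Context {R : realType} {p : nat -> R} (p_ge0 : forall k, 0 <= p k).

Definition pmf_measure := mseries (fun k => mscale (NngNum (p_ge0 k)) \d_k) 0.

Lemma pmf_measureE (A : set nat) :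
  pmf_measure A = limn (fun N => \sum_(0 <= k < N) ((p k)%:E * (\1_A k)%:E))%E.
Proof. by []. Qed.

Lemma pmf_measure1 m : pmf_measure [set m] = (p m)%:E.
Proof.
rewrite pmf_measureE; apply: lim_near_cst => //; near=> N.
have mN : (m < N)%N by near: N; exact: nbhs_infty_gt.
rewrite (bigD1_seq m) ?mem_index_iota ?iota_uniq//=.
rewrite indicE mem_set// mule1 big1 ?adde0// => k /negbTE km.
by rewrite indicE memNset ?mule0// => /= mk; rewrite mk eqxx in km.
Unshelve. all: end_near. Qed.

Lemma pmf_measureT : series p @ \oo --> (1 : R) -> pmf_measure setT = 1%E.
Proof.
move=> p1; rewrite pmf_measureE; apply: cvg_lim => //.
under eq_fun do under eq_bigr do rewrite indicE in_setT mule1.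
by under eq_fun do rewrite sumEFin; apply/fine_cvgP; split; [exact: nearW | exact: p1].
Qed.

(* mnormalize leaves a measure of total mass 1 unchanged; it only supplies the
   probability structure. *)
Definition pmf_prob := mnormalize pmf_measure \d_0%N.

Lemma pmf_prob1 : series p @ \oo --> (1 : R) -> forall m, fine (pmf_prob [set m]) = p m.
Proof.
move=> p1 m; rewrite /pmf_prob (mnormalize_mass1 _ _ (pmf_measureT p1)).
by rewrite -[LHS]/(fine (pmf_measure [set m])) pmf_measure1.
Qed.

End pmf_measure.

Lemma sum_sum_diag_offdiag (R : pzSemiRingType) (I : eqType) (s : seq I)
    (F : I -> I -> R) (a b : R) :
  uniq s -> (forall i, i \in s -> F i i = a) ->
  (forall i j, i \in s -> j \in s -> i != j -> F i j = b) ->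
  \sum_(i <- s) \sum_(j <- s) F i j = (size s)%:R * (a + (size s).-1%:R * b).
Proof.
move=> us Fa Fb; have sum_cst (r : seq I) (c : R) : \sum_(j <- r) c = (size r)%:R * c.
  by rewrite big_const_seq [count _ _]count_predT iter_addr_0 mulr_natl.
rewrite -[RHS]sum_cst; apply: eq_big_seq => i si.
rewrite (bigD1_seq i si us) (Fa i si) -(size_rem si) -sum_cst (rem_filter i us) big_filter.
congr (_ + _); rewrite big_seq_cond [RHS]big_seq_cond; apply: eq_bigr => j /andP[js ji].
by apply: Fb; rewrite // eq_sym.
Qed.

Lemma cvg_inv_natr_pred (R : realType) (u : nat -> nat) :
  u @ \oo --> \oo -> ((u n).-1%:R^-1 : R) @[n --> \oo] --> 0.
Proof.
move=> /cvgnyPge u_oo; have /cvgnyPge upred_oo : (fun n => (u n).-1) @ \oo --> \oo.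
  by apply/cvgnyPge => M; apply: filterS (u_oo M.+1) => n Mu; rewrite -ltnS (ltn_predK Mu).
apply/gtr0_cvgV0; last exact/cvgrnyP/cvgnyPge.
by apply: filterS (upred_oo 1%N) => n; rewrite ltr0n.
Qed.

Section degree_frequency.
Context {d : measure_display} {T : measurableType d} {R : realType}.
Context {P : probability T R} {kn : nat -> nat} {chi : nat -> nat -> nat -> T -> bool}.
Hypothesis kn_ge2 : forall n, (2 <= n)%N -> (2 <= kn n)%N.
Hypothesis measurable_chi : forall n k l, (2 <= n)%N -> measurable [set w | chi n k l w].
Hypothesis degree_exchangeable1 : forall n k m, (2 <= n)%N -> (1 <= k <= kn n)%N ->
  P [set w | degree kn chi n k w = m] = P [set w | degree kn chi n 1 w = m].
Hypothesis degree_exchangeable2 : forall n k l a b, (2 <= n)%N ->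
  (1 <= k <= kn n)%N -> (1 <= l <= kn n)%N -> k <> l ->
  P [set w | degree kn chi n k w = a /\ degree kn chi n l w = b] =
  P [set w | degree kn chi n 1 w = a /\ degree kn chi n 2 w = b].

Local Notation E n j a := [set w | degree kn chi n j w = a].
Local Notation nodes n := (index_iota 1 (kn n).+1).
Local Notation p n a := (fine (P (E n 1 a))).
Local Notation q n a := (fine (P (E n 1 a `&` E n 2 a))).

Lemma natr_kn_neq0 n : (2 <= n)%N -> (kn n)%:R != 0 :> R.
Proof. by move=> n2; rewrite pnatr_eq0 -lt0n (ltn_trans _ (kn_ge2 _ n2)). Qed.

Lemma measurable_fun_degree n j : (2 <= n)%N -> measurable_fun setT (degree kn chi n j).
Proof.
move=> n2; apply: measurable_fun_sumn => l.
exact/measurable_fun_nat_of_bool/measurable_chi.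
Qed.

Lemma measurable_degree n j a : (2 <= n)%N -> measurable (E n j a).
Proof.
by move=> n2; apply: (measurable_nat_preimage _ [set a]); exact: measurable_fun_degree.
Qed.

Lemma PfracE n a : Pfrac kn chi n a =
  (fun w => (kn n)%:R^-1 * \sum_(j <- nodes n) \1_(E n j a) w) :> (T -> R).
Proof.
apply/funext => w; rewrite /Pfrac /Ncount natr_sum mulrC.
by congr (_ * _); apply: eq_bigr => j _; rewrite indic_nat_eq.
Qed.

Lemma Pfrac_ge0_le1 n a w : (0 < kn n)%N -> 0 <= Pfrac (R := R) kn chi n a w <= 1.
Proof.
move=> kn0; rewrite /Pfrac divr_ge0//= ler_pdivrMr ?ltr0n// mul1r ler_nat.
apply: (@leq_trans (\sum_(1 <= j < (kn n).+1) 1)%N).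
  by apply: leq_sum => j _; exact: leq_b1.
by rewrite sum_nat_const_nat subn1 muln1.
Qed.

Lemma bounded_mfun_Pfrac n a : (2 <= n)%N -> bounded_mfun (Pfrac (R := R) kn chi n a).
Proof.
move=> n2; rewrite PfracE; apply: bounded_mfunM; first exact: bounded_mfun_cst.
by apply: bounded_mfun_sum => j; exact/bounded_mfun_indic/measurable_degree.
Qed.

Lemma Rintegral_Pfrac n a : (2 <= n)%N -> \int[P]_w Pfrac kn chi n a w = p n a.
Proof.
move=> n2; rewrite PfracE RintegralZl//; last first.
  apply/bounded_mfun_integrable/bounded_mfun_sum => j.
  exact/bounded_mfun_indic/measurable_degree.
rewrite Rintegral_sum_indic => [|j]; last exact: measurable_degree.
rewrite (eq_big_seq (fun=> p n a)) => [|j]; last first.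
  by rewrite mem_index_iota => jn; rewrite degree_exchangeable1.
by rewrite sumr_const_nat subn1 -[fine _ *+ _]mulr_natl mulKf ?natr_kn_neq0.
Qed.

Lemma Rintegral_Pfrac_sqr n a : (2 <= n)%N ->
  \int[P]_w Pfrac kn chi n a w ^+ 2 = (p n a + (kn n).-1%:R * q n a) / (kn n)%:R.
Proof.
move=> n2; have mE j : measurable (E n j a) by exact: measurable_degree.
rewrite PfracE; under eq_fun do rewrite exprMn.
rewrite RintegralZl//; last first.
  by apply/bounded_mfun_integrable/bounded_mfunM; apply/bounded_mfun_sum => j;
    exact/bounded_mfun_indic.
rewrite Rintegral_sqr_sum_indic//.
rewrite (@sum_sum_diag_offdiag _ _ _ _ (p n a) (q n a)) ?iota_uniq//.
- by rewrite size_iota subn1 /= expr2 -mulrA mulKf ?natr_kn_neq0// mulrC.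
- by move=> j; rewrite mem_index_iota setIid => jn; rewrite degree_exchangeable1.
move=> j l; rewrite !mem_index_iota => jn ln /eqP jl.
by congr fine; apply: degree_exchangeable2.
Qed.

Lemma pair_probabilityE n a : (2 <= n)%N ->
  let M2 := \int[P]_w Pfrac kn chi n a w ^+ 2 in
  q n a = M2 + (M2 - p n a) / (kn n).-1%:R.
Proof.
move=> n2 /=; rewrite Rintegral_Pfrac_sqr//.
have k1_neq0 : (kn n).-1%:R != 0 :> R by rewrite pnatr_eq0 -lt0n ltn_predRL kn_ge2.
have := natr_kn_neq0 _ n2; have -> : (kn n)%:R = (kn n).-1%:R + 1 :> R.
  by rewrite natr1 (prednK (ltn_trans _ (kn_ge2 _ n2))).
by move=> k_neq0; field; apply/andP.
Qed.

Hypothesis kn_cvgy : kn @ \oo --> \oo.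

Lemma cvg_degree_probabilities a c :
  cvg_in_prob P (fun n => Pfrac kn chi n a) c ->
  (fun n => p n a) @ \oo --> c /\ (fun n => q n a) @ \oo --> c ^+ 2.
Proof.
move=> Pfrac_c; have n2 : \forall n \near \oo, (2 <= n)%N by exact: nbhs_infty_ge.
have Pfrac01 : \forall n \near \oo, bounded_mfun (Pfrac (R := R) kn chi n a) /\
    forall w, 0 <= Pfrac (R := R) kn chi n a w <= 1.
  apply: filterS n2 => n n2; split; first exact: bounded_mfun_Pfrac.
  by move=> w; apply: Pfrac_ge0_le1; rewrite (ltn_trans _ (kn_ge2 _ n2)).
have [E1 E2] := cvg_in_prob_moments01 P _ c Pfrac01 Pfrac_c.
have p_c : (fun n => p n a) @ \oo --> c.
  apply: cvg_trans E1; apply: near_eq_cvg; apply: filterS n2 => n n2.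
  by rewrite Rintegral_Pfrac.
split=> //; pose M2 n := \int[P]_w Pfrac kn chi n a w ^+ 2.
have : (fun n => M2 n + (M2 n - p n a) / (kn n).-1%:R) @ \oo --> c ^+ 2 + (c ^+ 2 - c) * 0.
  exact: cvgD E2 (cvgM (cvgB E2 p_c) (cvg_inv_natr_pred R _ kn_cvgy)).
rewrite mulr0 addr0; apply: cvg_trans; apply: near_eq_cvg.
by apply: filterS n2 => n n2; rewrite pair_probabilityE.
Qed.

Lemma covariance_degree_indic n a : (2 <= n)%N ->
  covariance P (fun w => ((degree kn chi n 1 w == a) : nat)%:R)
               (fun w => ((degree kn chi n 2 w == a) : nat)%:R) = (q n a - p n a ^+ 2)%:E.
Proof.
move=> n2; have indE j : (fun w => ((degree kn chi n j w == a) : nat)%:R) =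
    \1_(E n j a) :> (T -> R) by apply/funext => w; rewrite indic_nat_eq.
have mE j : measurable (E n j a) by exact: measurable_degree.
rewrite !indE covariance_indic// expr2; congr (_ - _ * _)%:E.
by rewrite (degree_exchangeable1 _ 2%N)// kn_ge2.
Qed.

Lemma cvg_covariance_degree_indic a c :
  cvg_in_prob P (fun n => Pfrac kn chi n a) c ->
  (fun n => covariance P (fun w => ((degree kn chi n 1 w == a) : nat)%:R)
                         (fun w => ((degree kn chi n 2 w == a) : nat)%:R)) @ \oo --> 0%E.
Proof.
move=> /cvg_degree_probabilities[p_c q_c].
have cov_n : \forall n \near \oo, (q n a - p n a ^+ 2)%:E =
    covariance P (fun w => ((degree kn chi n 1 w == a) : nat)%:R)
                 (fun w => ((degree kn chi n 2 w == a) : nat)%:R).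
  by apply: filterS (nbhs_infty_ge 2) => n n2; rewrite covariance_degree_indic.
apply: cvg_trans (near_eq_cvg cov_n) _; apply: cvg_EFin; first exact: nearW.
by rewrite -(subrr (c ^+ 2)); exact: cvgB q_c (cvgM p_c p_c).
Qed.

End degree_frequency.

Theorem proposition3 (d : measure_display) (T : measurableType d) (R : realType)
  (P : probability T R) (kn : nat -> nat) (chi : nat -> nat -> nat -> T -> bool)
  (L : nat -> R) :
  (* graphs indexed by n >= 2, node sets {1..k_n} with k_n >= 2 *)
  (forall n, (2 <= n)%N -> (2 <= kn n)%N) ->
  (* edge indicators are random variables *)
  (forall n k l, (2 <= n)%N -> measurable [set w | chi n k l w]) ->
  (* |V_n| -> oo *)
  (forall M : nat, \forall n \near \oo, (M <= kn n)%N) ->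
  (* D_{n,k} has the same distribution as D_{n,1} *)
  (forall n k m, (2 <= n)%N -> (1 <= k <= kn n)%N ->
     P [set w | degree kn chi n k w = m] = P [set w | degree kn chi n 1 w = m]) ->
  (* (D_{n,k}, D_{n,l}) has the same joint distribution as (D_{n,1}, D_{n,2}) *)
  (forall n k l a b, (2 <= n)%N -> (1 <= k <= kn n)%N -> (1 <= l <= kn n)%N ->
     k <> l ->
     P [set w | degree kn chi n k w = a /\ degree kn chi n l w = b] =
     P [set w | degree kn chi n 1 w = a /\ degree kn chi n 2 w = b]) ->
  (* P_n(d) -> L(d) in probability *)
  (forall dd : nat, cvg_in_prob P (fun n => Pfrac kn chi n dd) (L dd)) ->
  (* L is a pmf on N *)
  (forall dd, 0 <= L dd) ->
  (fun N => \sum_(0 <= dd < N) L dd) @ \oo --> (1 : R) ->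
  (* (i) *)
  (exists (d' : measure_display) (T' : measurableType d') (Q : probability T' R)
          (D : T' -> nat),
     (forall m, measurable [set w | D w = m]) /\
     (forall m, fine (Q [set w | D w = m]) = L m) /\
     cvg_in_distrN P (fun n => degree kn chi n 1) Q D) /\
  (* (ii) *)
  (forall dd : nat,
     (fun n => covariance P
        (fun w => ((degree kn chi n 1 w == dd) : nat)%:R)
        (fun w => ((degree kn chi n 2 w == dd) : nat)%:R)) @ \oo --> 0%E).
Proof.
move=> kn_ge2 mchi /cvgnyPge kn_cvgy deg1 deg2 Pfrac_L L_ge0 L_sum1.
split=> [|a].
  exists _, nat, (pmf_prob L_ge0), id; split=> //; split=> [m|]; first exact: pmf_prob1.
  apply: cvg_in_distrN_pmf => //.
    by apply: filterS (nbhs_infty_ge 2) => n n2; exact: measurable_fun_degree.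
  move=> m; rewrite pmf_prob1//.
  exact: (cvg_degree_probabilities kn_ge2 mchi deg1 deg2 kn_cvgy _ _ (Pfrac_L m)).1.
exact: cvg_covariance_degree_indic kn_ge2 mchi deg1 deg2 kn_cvgy _ _ (Pfrac_L a).
Qed.
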